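(* Let $n\in\{2,6,10,\dots\}$ and let $p_n$ denote the minimum length of an increasing path of $f_n$ from the origin to a local maximum of $f_n$. Then $p_2=2$ and $p_{n+4}\ge 2p_n$ for all $n\in\{2,6,10,\dots\}$.
   Context: For $n\in\{2,6,10,\dots\}$ define polynomials $f_n$ in variables $x_1,\dots,x_n$ (evaluated on $\{0,1\}^n$) recursively. Set $f_2(x_1,x_2):=x_1+x_2$. For $n\in\{2,6,10,\dots\}$, write $\mathbf{x}=(x_1,\dots,x_n)$, $S:=\sum_{i=1}^n x_i$, let $M_n:=\max_{\{0,1\}^n} f_n-\min_{\{0,1\}^n} f_n+1$, and define $f_{n+4}(\mathbf{x},x_{n+1},x_{n+2},x_{n+3},x_{n+4}) := f_n(\mathbf{x}) - M_n n^2 x_{n+1} + M_n(n+1) S x_{n+1} - x_{n+2} - 2M_n n S x_{n+2} + 2M_n n(n+2) x_{n+1}x_{n+2} - 4 S x_{n+3} + 2x_{n+1}x_{n+3} + 2x_{n+2}x_{n+3} - 3x_{n+3} + (M_n(n-1)+4) S x_{n+4} + 6M_n n^2 x_{n+3}x_{n+4} - 5M_n n^2 x_{n+4}$. For a function $f:\{0,1\}^m\to\mathbb{R}$, an increasing path is a sequence of vertices $v_0,\dots,v_k$ of $\{0,1\}^m$ such that consecutive vertices differ in exactly one coordinate and $f(v_{j+1})>f(v_j)$ for all $j$; its length is $k$. A local maximum is a vertex no neighbor of which has strictly larger value. *)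

From mathcomp Require Import all_boot all_order all_algebra.
Set Implicit Arguments. Unset Strict Implicit. Unset Printing Implicit Defensive.
Import Order.TTheory GRing.Theory Num.Theory.
Local Open Scope ring_scope.

(* index k encodes n = 4k+2 *)
Definition dim (k : nat) : nat := (4 * k + 2)%N.

(* a 0/1 vector of length m, as coordinates x_1..x_m stored at indices 0..m-1,
   extended by 0 beyond m *)
Definition vec (m : nat) (t : m.-tuple bool) : nat -> int :=
  fun i => ((nth false t i : nat))%:Z.

Definition spread (m : nat) (g : (nat -> int) -> int) : int :=
  (\big[Num.max/ g (fun _ => 0)]_(t : m.-tuple bool) g (vec t))
  - (\big[Num.min/ g (fun _ => 0)]_(t : m.-tuple bool) g (vec t)) + 1.

(* f k = f_{4k+2}; variable x_{i+1} is x i (0-indexed) *)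
Fixpoint f (k : nat) : (nat -> int) -> int :=
  match k with
  | 0%N => fun x => x 0%N + x 1%N
  | k'.+1 => fun x =>
    let n := dim k' in
    let M := spread n (f k') in
    let S := \sum_(i < n) x i in
    let N : int := n%:Z in
    let y1 := x n in let y2 := x n.+1 in let y3 := x n.+2 in let y4 := x n.+3 in
    f k' x - M * N ^+ 2 * y1 + M * (N + 1) * S * y1 - y2
    - 2 * M * N * S * y2 + 2 * M * N * (N + 2) * y1 * y2
    - 4 * S * y3 + 2 * y1 * y3 + 2 * y2 * y3 - 3 * y3
    + (M * (N - 1) + 4) * S * y4 + 6 * M * N ^+ 2 * y3 * y4
    - 5 * M * N ^+ 2 * y4
  end.

Definition F (k : nat) (t : (dim k).-tuple bool) : int := f k (vec t).

Definition adj (m : nat) (t u : m.-tuple bool) : bool :=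
  (\sum_(i < m) (tnth t i != tnth u i) == 1)%N.

Definition origin (k : nat) : (dim k).-tuple bool := nseq_tuple (dim k) false.

Definition local_max (k : nat) (v : (dim k).-tuple bool) : bool :=
  [forall w, adj v w ==> ~~ (F v < F w)].

(* v0 :: vs is an increasing path of f_n (length = size vs) *)
Definition increasing_path (k : nat) (v0 : (dim k).-tuple bool)
    (vs : seq ((dim k).-tuple bool)) : bool :=
  path (fun v w => adj v w && (F v < F w)) v0 vs.

Definition is_p (k : nat) (L : nat) : Prop :=
  (exists vs, [/\ increasing_path (origin k) vs,
                  local_max (last (origin k) vs) & size vs = L])
  /\ (forall vs, increasing_path (origin k) vs ->
                 local_max (last (origin k) vs) -> (L <= size vs)%N).

(* Write a vertex of {0,1}^(n+4) as (x, y) with y in {0,1}^4 and S = |x|.  Then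
   f_(n+4)(x, y) = f_n(x) + g(S, y) for a gadget polynomial g, and since M_n exceeds the
   oscillation of f_n, g dictates the shape of every increasing path.  At y = 0000 the
   gadget is constant, so the path climbs f_n until y_1 may be set, which requires
   x = 1...1; y_2 is then forced; at y = 1100 every move of x is allowed, and y_3 may
   be set only at x = 0...0; y_4 is then forced; at y = 1111 the gadget is constant
   again, so the path climbs f_n from the origin once more.  By induction the only
   local maximum reachable from the origin is 1...1, so an increasing path of
   f_(n+4) to a local maximum contains two increasing paths of f_n from the origin
   to its local maximum 1...1, whence p_(n+4) >= 2 p_n. *)

From mathcomp Require Import all_boot all_order all_algebra.
From mathcomp Require Import zify ring.
Import Order.TTheory GRing.Theory Num.Theory.
Set Implicit Arguments. Unset Strict Implicit. Unset Printing Implicit Defensive.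
Local Open Scope ring_scope.

Section Hypercube.
Variable m : nat.
Implicit Types (t u x : m.-tuple bool) (j : 'I_m).

Definition flip t j : m.-tuple bool :=
  [tuple if i == j then ~~ tnth t i else tnth t i | i < m].

Lemma tnth_flip t j i : tnth (flip t j) i = if i == j then ~~ tnth t i else tnth t i.
Proof. by rewrite tnth_mktuple. Qed.

Lemma nth_flip t j i :
  nth false (flip t j) i = if i == j :> nat then ~~ nth false t i else nth false t i.
Proof.
case: (ltnP i m) => [lt_im | le_mi].
  by have := tnth_flip t j (Ordinal lt_im); rewrite !(tnth_nth false).
rewrite !nth_default ?size_tuple //; case: eqP => // eq_ij.
by move: (ltn_ord j); rewrite -eq_ij ltnNge le_mi.
Qed.

Lemma adj_flip t j : adj t (flip t j).
Proof.
rewrite /adj (bigD1 j) //= big1 ?tnth_flip ?eqxx ?addn0; first by case: (tnth t j).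
by move=> i /negbTE neq_ij; rewrite tnth_flip neq_ij eqxx.
Qed.

Lemma adjP t u : reflect (exists j, u = flip t j) (adj t u).
Proof.
apply: (iffP (sum_nat_eq1 _ _)) => [[j [_ neq_j eq_other]] | [j ->]]; last first.
  exact/sum_nat_eq1/adj_flip.
exists j; apply: eq_from_tnth => i; rewrite tnth_flip.
have [-> | /eq_other] := eqVneq i j; first by move: neq_j; case: (tnth t j) (tnth u j) => [] [].
by case: (tnth t i) (tnth u i) => [] [] /(_ isT).
Qed.

Definition weight x : int := \sum_(i < m) (tnth x i : nat)%:Z.

Lemma weight_ge0 x : 0 <= weight x.
Proof. by apply: sumr_ge0 => i _; case: (tnth x i). Qed.

Lemma weight_le x : weight x <= m%:Z.
Proof.
apply: le_trans (_ : \sum_(i < m) (1 : int) <= _).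
  by apply: ler_sum => i _; case: (tnth x i).
by rewrite sumr_const card_ord -natz.
Qed.

Lemma weight_range x : 0 <= weight x <= m%:Z.
Proof. by rewrite weight_ge0 weight_le. Qed.

Lemma weight_flip x j : weight (flip x j) = weight x + (if tnth x j then -1 else 1).
Proof.
rewrite /weight (bigD1 j) //= [in RHS](bigD1 j) //= tnth_flip eqxx.
rewrite (eq_bigr (fun i => (tnth x i : nat)%:Z)) => [|i /negbTE neq_ij]; last first.
  by rewrite tnth_flip neq_ij.
by case: (tnth x j) => /=; ring.
Qed.

Lemma weight_nseq b : weight (nseq_tuple m b) = (b * m)%N%:Z.
Proof.
rewrite /weight (eq_bigr (fun _ => (b : nat)%:Z)) => [|i _]; last by rewrite tnth_nseq.
by rewrite sumr_const card_ord PoszM -[m%:Z]natz mulr_natr.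
Qed.

Lemma weight_eq_size x : weight x = m%:Z -> x = nseq_tuple m true.
Proof.
move=> wx; have sum0 : \sum_(i < m) (1 - (tnth x i : nat)%:Z) = 0.
  by rewrite sumrB sumr_const card_ord -/(weight x) wx -natz subrr.
apply: eq_from_tnth => i; rewrite tnth_nseq.
have one_sub_ge0 j : true -> 0 <= 1 - (tnth x j : nat)%:Z by case: (tnth x j).
by have := psumr_eq0P one_sub_ge0 sum0 (i := i) isT; case: (tnth x i).
Qed.

Lemma weight_eq0 x : weight x = 0 -> x = nseq_tuple m false.
Proof.
move=> wx; apply: eq_from_tnth => i; rewrite tnth_nseq.
have nat_ge0 j : true -> 0 <= (tnth x j : nat)%:Z by [].
by have := psumr_eq0P nat_ge0 wx (i := i) isT; case: (tnth x i).
Qed.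

Lemma weight_flip_full x j : weight x = m%:Z -> weight (flip x j) = m%:Z - 1.
Proof.
move=> full; have := weight_le (flip x j); rewrite weight_flip full.
by case: (tnth x j) => /=; lia.
Qed.

Lemma weight_flip_empty x j : weight x = 0 -> weight (flip x j) = 1.
Proof.
move=> empty; have := weight_ge0 (flip x j); rewrite weight_flip empty.
by case: (tnth x j).
Qed.

Lemma weight_gt0 x : 0 < weight x -> exists j, tnth x j.
Proof.
have [/existsP // | /existsPn no_one] := boolP [exists j, tnth x j].
by rewrite /weight big1 ?ltxx // => i _; move: (no_one i); case: (tnth x i).
Qed.
End Hypercube.

Section Landscape.
Variable k : nat.
Implicit Types (v w : (dim k).-tuple bool) (vs : seq ((dim k).-tuple bool)).

Definition ones : (dim k).-tuple bool := nseq_tuple (dim k) true.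

Lemma increasing_path_cons v w vs :
  increasing_path v (w :: vs) = [&& adj v w, F v < F w & increasing_path w vs].
Proof. by rewrite /increasing_path /= andbA. Qed.

Lemma local_maxPn v : reflect (exists j, F v < F (flip v j)) (~~ local_max v).
Proof.
apply: (iffP forallPn) => [[w] | [j lt_vj]]; last first.
  by exists (flip v j); rewrite adj_flip lt_vj.
by rewrite negb_imply negbK => /andP[/adjP[j ->] lt_vj]; exists j.
Qed.

Lemma climb_to_local_max v :
  exists2 vs, increasing_path v vs & local_max (last v vs).
Proof.
have climb n (u : (dim k).-tuple bool) :
    (#|[set w : (dim k).-tuple bool | (F u < F w)%R]| <= n)%N ->
    exists2 vs, increasing_path u vs & local_max (last u vs).
  elim: n u => [|n IHn] u.
    rewrite leqn0 cards_eq0 => /eqP no_higher; exists [::] => //=.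
    apply/forallP => w; apply/implyP => _; apply/negP => lt_uw.
    by move/setP/(_ w): no_higher; rewrite !inE lt_uw.
  have [lm_u | /local_maxPn[j lt_uj]] := boolP (local_max u); first by exists [::].
  move=> card_higher; have [ws path_ws lm_ws] : exists2 ws,
      increasing_path (flip u j) ws & local_max (last (flip u j) ws).
    apply: IHn; rewrite -ltnS (leq_trans _ card_higher) //.
    have higher_sub :
      flip u j |: [set w | F (flip u j) < F w] \subset [set w | F u < F w].
      by apply/subsetP => w; rewrite !inE => /predU1P[-> // | /(lt_trans lt_uj)].
    by have := subset_leq_card higher_sub; rewrite cardsU1 inE ltxx.
  by exists (flip u j :: ws); rewrite // increasing_path_cons adj_flip lt_uj.
exact: climb _ v (leqnn _).
Qed.

(* Paths of a fixed length form a finite type, so this predicate is boolean and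
   [ex_minn] yields the minimal length. *)
Definition reaches_local_max_in (L : nat) : bool :=
  [exists vs : L.-tuple _, increasing_path (origin k) vs
                          && local_max (last (origin k) vs)].

Lemma exists_p : exists L, is_p k L.
Proof.
have [vs path_vs lm_vs] := climb_to_local_max (origin k).
have reach : exists L, reaches_local_max_in L.
  by exists (size vs); apply/existsP; exists (in_tuple vs); rewrite path_vs.
case: (ex_minnP reach) => L /existsP[ws /andP[path_ws lm_ws]] L_min.
exists L; split; first by exists ws; rewrite size_tuple.
move=> us path_us lm_us; apply: L_min; apply/existsP.
by exists (in_tuple us); rewrite path_us.
Qed.
End Landscape.

Definition gadget (M N S y1 y2 y3 y4 : int) : int :=
  - M * N ^+ 2 * y1 + M * (N + 1) * S * y1 - y2
    - 2 * M * N * S * y2 + 2 * M * N * (N + 2) * y1 * y2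
    - 4 * S * y3 + 2 * y1 * y3 + 2 * y2 * y3 - 3 * y3
    + (M * (N - 1) + 4) * S * y4 + 6 * M * N ^+ 2 * y3 * y4
    - 5 * M * N ^+ 2 * y4.

Section Gadget.
Variables M N : int.
Hypotheses (M_ge1 : 1 <= M) (N_ge2 : 2 <= N).
Local Notation g := (gadget M N).

Ltac gadget_nia :=
  rewrite /gadget ?(mulr0, mul0r, mulr1, mul1r, add0r, addr0, subr0, sub0r); nia.

Lemma gadget0000 S : g S 0 0 0 0 = 0.
Proof. by rewrite /gadget; ring. Qed.

Lemma gadget1111 S : g S 1 1 1 1 = 2 * M * N ^+ 2 + 4 * M * N.
Proof. by rewrite /gadget; ring. Qed.

Lemma gadget_ymoves_stage0 S : 0 <= S <= N ->
  [/\ g S 0 0 0 0 < g S 1 0 0 0 <-> S = N,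
      g S 0 1 0 0 < g S 0 0 0 0,
      g S 0 0 1 0 < g S 0 0 0 0
    & g S 0 0 0 1 < g S 0 0 0 0].
Proof. by case/andP=> S_ge0 S_leN; split; [split|..]; gadget_nia. Qed.

Lemma gadget_xmove_stage1 a b : b - a < M -> b + g (N - 1) 1 0 0 0 < a + g N 1 0 0 0.
Proof. by move=> lt_baM; gadget_nia. Qed.

Lemma gadget_ymoves_stage1 :
  [/\ g N 0 0 0 0 < g N 1 0 0 0,
      g N 1 0 0 0 < g N 1 1 0 0,
      g N 1 0 1 0 < g N 1 0 0 0
    & g N 1 0 0 1 < g N 1 0 0 0].
Proof. by split; gadget_nia. Qed.

Lemma gadget_xmove_stage2 S a b : a - b < M -> a + g S 1 1 0 0 < b + g (S - 1) 1 1 0 0.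
Proof. by move=> lt_abM; gadget_nia. Qed.

Lemma gadget_ymoves_stage2 S : 0 <= S <= N ->
  [/\ g S 0 1 0 0 < g S 1 1 0 0,
      g S 1 0 0 0 < g S 1 1 0 0,
      g S 1 1 0 0 < g S 1 1 1 0 <-> S = 0
    & g S 1 1 0 1 < g S 1 1 0 0].
Proof. by case/andP=> S_ge0 S_leN; split; [..|split|]; gadget_nia. Qed.

Lemma gadget_xmove_stage3 a b : b - a < M -> b + g 1 1 1 1 0 < a + g 0 1 1 1 0.
Proof. by move=> lt_baM; gadget_nia. Qed.

Lemma gadget_ymoves_stage3 :
  [/\ g 0 0 1 1 0 < g 0 1 1 1 0,
      g 0 1 0 1 0 < g 0 1 1 1 0,
      g 0 1 1 0 0 < g 0 1 1 1 0
    & g 0 1 1 1 0 < g 0 1 1 1 1].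
Proof. by split; gadget_nia. Qed.

Lemma gadget_ymoves_stage4 S : 0 <= S <= N ->
  [/\ g S 0 1 1 1 < g S 1 1 1 1,
      g S 1 0 1 1 < g S 1 1 1 1,
      g S 1 1 0 1 < g S 1 1 1 1
    & g S 1 1 1 0 < g S 1 1 1 1].
Proof. by case/andP=> S_ge0 S_leN; split; gadget_nia. Qed.
End Gadget.

Definition Mk k : int := spread (dim k) (f k).

Lemma f_succ k x : f k.+1 x = f k x +
  gadget (Mk k) (dim k)%:Z (\sum_(i < dim k) x i)
         (x (dim k)) (x (dim k).+1) (x (dim k).+2) (x (dim k).+3).
Proof. by rewrite /= /gadget /Mk; ring. Qed.

Lemma dimS k : dim k.+1 = (dim k + 4)%N.
Proof. by rewrite /dim; lia. Qed.

Lemma dim_ge2 k : 2 <= (dim k)%:Z.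
Proof. by rewrite /dim; lia. Qed.

Lemma f_eq_on_prefix k x x' :
  (forall i, (i < dim k)%N -> x i = x' i) -> f k x = f k x'.
Proof.
elim: k x x' => [|k IHk] x x' eq_xx'; first by rewrite /= !eq_xx'.
have eq_low i : (i < dim k)%N -> x i = x' i.
  by move=> lt_ik; apply: eq_xx'; rewrite dimS; lia.
rewrite !f_succ (IHk x x') // (eq_bigr (fun i : 'I_(dim k) => x' i)) => [|i _].
  by rewrite !eq_xx' // dimS; lia.
exact: eq_low.
Qed.

Lemma F_sub_lt_Mk k (v w : (dim k).-tuple bool) : F v - F w < Mk k.
Proof.
rewrite /Mk /spread ltzD1 /F; apply: lerB.
- exact: (le_bigmax _ (fun t : (dim k).-tuple bool => f k (vec t))).
- exact: (bigmin_le _ _ (fun t : (dim k).-tuple bool => f k (vec t))).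
Qed.

Lemma Mk_ge1 k : 1 <= Mk k.
Proof. by have := F_sub_lt_Mk (origin k) (origin k); lia. Qed.

Section Level.
Variable k : nat.
Local Notation M := (Mk k).
Local Notation N := (dim k)%:Z.
Implicit Types (t u : (dim k.+1).-tuple bool) (s : nat).

Definition base t : (dim k).-tuple bool := [tuple nth false t i | i < dim k].

Definition top t m : bool := nth false t (dim k + m).

Lemma nth_base t i : (i < dim k)%N -> nth false (base t) i = nth false t i.
Proof.
move=> lt_ik; have := tnth_mktuple (fun i : 'I_(dim k) => nth false t i) (Ordinal lt_ik).
by rewrite (tnth_nth false).
Qed.

Lemma F_succ t : F t = F (base t) +
  gadget M N (weight (base t)) (top t 0) (top t 1) (top t 2) (top t 3).
Proof.
rewrite /F f_succ (@f_eq_on_prefix k (vec t) (vec (base t))) => [|i lt_ik]; last first.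
  by rewrite /vec nth_base.
have -> : \sum_(i < dim k) vec t i = weight (base t).
  by apply: eq_bigr => i _; rewrite /vec (tnth_nth false) nth_base.
by rewrite /top addn0 addn1 addn2 addn3.
Qed.

Lemma leq_dimS : (dim k <= dim k.+1)%N.
Proof. by rewrite dimS leq_addr. Qed.

Definition xcoord (i : 'I_(dim k)) : 'I_(dim k.+1) := widen_ord leq_dimS i.

Lemma ycoord_subproof m : (m < 4)%N -> (dim k + m < dim k.+1)%N.
Proof. by rewrite dimS ltn_add2l. Qed.

(* [ycoord m] is the coordinate of the paper's variable x_(n+m+1). *)
Definition ycoord m (lt_m4 : (m < 4)%N) : 'I_(dim k.+1) :=
  Ordinal (ycoord_subproof lt_m4).

Variant coord_spec : 'I_(dim k.+1) -> Type :=
  | XCoord i : coord_spec (xcoord i)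
  | YCoord m (lt_m4 : (m < 4)%N) : coord_spec (ycoord lt_m4).

Lemma coordP j : coord_spec j.
Proof.
have [lt_jk | le_kj] := ltnP j (dim k).
  by rewrite (_ : j = xcoord (Ordinal lt_jk)); [constructor | apply: val_inj].
have lt_m4 : (j - dim k < 4)%N by have := ltn_ord j; have := dimS k; lia.
by rewrite (_ : j = ycoord lt_m4); [constructor | apply: val_inj; rewrite /= subnKC].
Qed.

Lemma base_flip_x t i : base (flip t (xcoord i)) = flip (base t) i.
Proof.
apply: eq_from_tnth => i'; rewrite tnth_flip !(tnth_nth false) !nth_base //.
by rewrite nth_flip.
Qed.

Lemma top_flip_x t i m : top (flip t (xcoord i)) m = top t m.
Proof.
rewrite /top nth_flip; case: eqP => //= eq_i.
by move: (ltn_ord i); rewrite -eq_i ltnNge leq_addr.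
Qed.

Lemma base_flip_y t m (lt_m4 : (m < 4)%N) : base (flip t (ycoord lt_m4)) = base t.
Proof.
apply: eq_from_tnth => i; rewrite !(tnth_nth false) !nth_base // nth_flip.
by case: eqP => //= eq_i; move: (ltn_ord i); rewrite eq_i ltnNge leq_addr.
Qed.

Lemma top_flip_y t m (lt_m4 : (m < 4)%N) m' :
  top (flip t (ycoord lt_m4)) m' = top t m' (+) (m' == m).
Proof.
by rewrite /top nth_flip /= eqn_add2l; case: (m' == m); rewrite ?addbT ?addbF.
Qed.

Definition stage t s : Prop :=
  [/\ top t 0 = (0 < s)%N, top t 1 = (1 < s)%N,
      top t 2 = (2 < s)%N & top t 3 = (3 < s)%N].

Lemma stage_flip_x t s i : stage t s -> stage (flip t (xcoord i)) s.
Proof. by rewrite /stage !top_flip_x. Qed.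

Lemma stage_flip_y t s (lt_s4 : (s < 4)%N) :
  stage t s -> stage (flip t (ycoord lt_s4)) s.+1.
Proof.
by case=> t0 t1 t2 t3; split; rewrite top_flip_y ?t0 ?t1 ?t2 ?t3;
  case: s lt_s4 {t0 t1 t2 t3} => [|[|[|[|]]]].
Qed.

(* Unlike [(b : nat)%:Z], [bit b] simplifies to the ring constants 0 and 1 once b is
   a concrete boolean, as the gadget lemmas are stated with these constants. *)
Definition bit (b : bool) : int := if b then 1 else 0.

Lemma nat_of_bitE (b : bool) : (b : nat)%:Z = bit b.
Proof. by case: b. Qed.

Lemma F_stage t s : stage t s -> F t = F (base t) + gadget M N (weight (base t))
  (bit (0 < s)%N) (bit (1 < s)%N) (bit (2 < s)%N) (bit (3 < s)%N).
Proof. by case=> t0 t1 t2 t3; rewrite F_succ !nat_of_bitE t0 t1 t2 t3. Qed.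

Lemma F_flip_y t s m (lt_m4 : (m < 4)%N) : stage t s -> F (flip t (ycoord lt_m4)) =
  F (base t) + gadget M N (weight (base t))
    (bit ((0 < s) (+) (0 == m))%N) (bit ((1 < s) (+) (1 == m))%N)
    (bit ((2 < s) (+) (2 == m))%N) (bit ((3 < s) (+) (3 == m))%N).
Proof.
by case=> t0 t1 t2 t3; rewrite F_succ base_flip_y !nat_of_bitE !top_flip_y t0 t1 t2 t3.
Qed.

Lemma stage_origin : stage (origin k.+1) 0.
Proof. by split; rewrite /top nth_nseq if_same. Qed.

Lemma base_origin : base (origin k.+1) = origin k.
Proof.
apply: eq_from_tnth => i; rewrite !(tnth_nth false) nth_base //.
by rewrite /origin !nth_nseq !if_same.
Qed.

Lemma stage_ones : stage (ones k.+1) 4.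
Proof. by split; rewrite /top nth_nseq dimS ltn_add2l. Qed.

Lemma base_ones : base (ones k.+1) = ones k.
Proof.
apply: eq_from_tnth => i; rewrite !(tnth_nth false) nth_base //.
by rewrite !nth_nseq ltn_ord (leq_trans (ltn_ord i) leq_dimS).
Qed.

Lemma ones_succ t : base t = ones k -> stage t 4 -> t = ones k.+1.
Proof.
move=> base_t [t0 t1 t2 t3]; apply: eq_from_tnth => i.
rewrite tnth_nseq (tnth_nth false).
have [lt_ik | le_ki] := ltnP i (dim k).
  by rewrite -nth_base // base_t nth_nseq lt_ik.
have lt_i4 : (i - dim k < 4)%N by have := ltn_ord i; have := dimS k; lia.
move: t0 t1 t2 t3; rewrite /top -[nat_of_ord i](subnKC le_ki).
by case: (i - dim k)%N lt_i4 => [|[|[|[|]]]].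
Qed.
End Level.

Section Stages.
Variable k : nat.
Local Notation N := (dim k)%:Z.
Local Notation yc m := (@ycoord k m isT).
Let M_ge1 := Mk_ge1 k.
Let N_ge2 := dim_ge2 k.
Implicit Types (t u : (dim k.+1).-tuple bool).

Lemma improve_stage0 t u : stage t 0 -> adj t u -> F t < F u ->
  (exists2 i, u = flip t (xcoord i) & F (base t) < F (flip (base t) i))
  \/ u = flip t (yc 0) /\ weight (base t) = N.
Proof.
move=> st /adjP[j ->]; case: (coordP j) => [i | m lt_m4].
  rewrite (F_stage st) (F_stage (stage_flip_x i st)) base_flip_x.
  by rewrite !gadget0000 !addr0; left; exists i.
have [y1 y2 y3 y4] := gadget_ymoves_stage0 M_ge1 N_ge2 (weight_range (base t)).
rewrite (F_flip_y _ st) (F_stage st) ltrD2l.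
case: m lt_m4 => [|[|[|[|m //]]]] lt_m4 /= lt_g.
- by right; split; [congr flip; apply: val_inj | apply/y1].
- by rewrite ltNge (ltW y2) in lt_g.
- by rewrite ltNge (ltW y3) in lt_g.
- by rewrite ltNge (ltW y4) in lt_g.
Qed.

Lemma not_local_max_stage0 t : stage t 0 ->
  ~~ local_max (base t) \/ weight (base t) = N -> ~~ local_max t.
Proof.
move=> st [/local_maxPn[i lt_i] | full]; apply/local_maxPn.
  exists (xcoord i); rewrite (F_stage st) (F_stage (stage_flip_x i st)) base_flip_x.
  by rewrite !gadget0000 !addr0.
exists (yc 0); rewrite (F_flip_y _ st) (F_stage st) ltrD2l /=.
by have [y1 _ _ _] := gadget_ymoves_stage0 M_ge1 N_ge2 (weight_range (base t)); apply/y1.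
Qed.

Lemma improve_stage1 t u : stage t 1 -> weight (base t) = N -> adj t u -> F t < F u ->
  u = flip t (yc 1).
Proof.
move=> st full /adjP[j ->]; case: (coordP j) => [i | m lt_m4].
  rewrite (F_stage st) (F_stage (stage_flip_x i st)) base_flip_x /=.
  rewrite (weight_flip_full i full) full.
  have x_move := gadget_xmove_stage1 M_ge1 N_ge2 (F_sub_lt_Mk (flip (base t) i) (base t)).
  by rewrite ltNge (ltW x_move).
have [y1 _ y3 y4] := gadget_ymoves_stage1 M_ge1 N_ge2.
rewrite (F_flip_y _ st) (F_stage st) full ltrD2l.
case: m lt_m4 => [|[|[|[|m //]]]] lt_m4 /= lt_g.
- by rewrite ltNge (ltW y1) in lt_g.
- by congr flip; apply: val_inj.
- by rewrite ltNge (ltW y3) in lt_g.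
- by rewrite ltNge (ltW y4) in lt_g.
Qed.

Lemma not_local_max_stage1 t : stage t 1 -> weight (base t) = N -> ~~ local_max t.
Proof.
move=> st full; apply/local_maxPn; exists (yc 1).
rewrite (F_flip_y _ st) (F_stage st) full ltrD2l /=.
by have [_ y2 _ _] := gadget_ymoves_stage1 M_ge1 N_ge2.
Qed.

Lemma improve_stage2 t u : stage t 2 -> adj t u -> F t < F u ->
  (exists i, u = flip t (xcoord i))
  \/ u = flip t (yc 2) /\ weight (base t) = 0.
Proof.
move=> st /adjP[j ->]; case: (coordP j) => [i | m lt_m4]; first by left; exists i.
have [y1 y2 y3 y4] := gadget_ymoves_stage2 M_ge1 N_ge2 (weight_range (base t)).
rewrite (F_flip_y _ st) (F_stage st) ltrD2l.
case: m lt_m4 => [|[|[|[|m //]]]] lt_m4 /= lt_g.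
- by rewrite ltNge (ltW y1) in lt_g.
- by rewrite ltNge (ltW y2) in lt_g.
- by right; split; [congr flip; apply: val_inj | apply/y3].
- by rewrite ltNge (ltW y4) in lt_g.
Qed.

Lemma not_local_max_stage2 t : stage t 2 -> ~~ local_max t.
Proof.
move=> st; apply/local_maxPn.
have [empty | nonempty] := eqVneq (weight (base t)) 0.
  exists (yc 2); rewrite (F_flip_y _ st) (F_stage st) ltrD2l /=.
  by have [_ _ y3 _] := gadget_ymoves_stage2 M_ge1 N_ge2 (weight_range (base t)); apply/y3.
have [i one_i] : exists i, tnth (base t) i.
  by apply: weight_gt0; rewrite lt_def nonempty weight_ge0.
exists (xcoord i); rewrite (F_stage st) (F_stage (stage_flip_x i st)) base_flip_x /=.
rewrite weight_flip one_i.
exact (gadget_xmove_stage2 M_ge1 N_ge2 _ (F_sub_lt_Mk (base t) (flip (base t) i))).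
Qed.

Lemma improve_stage3 t u : stage t 3 -> weight (base t) = 0 -> adj t u -> F t < F u ->
  u = flip t (yc 3).
Proof.
move=> st empty /adjP[j ->]; case: (coordP j) => [i | m lt_m4].
  rewrite (F_stage st) (F_stage (stage_flip_x i st)) base_flip_x /=.
  rewrite (weight_flip_empty i empty) empty.
  have x_move := gadget_xmove_stage3 M_ge1 N_ge2 (F_sub_lt_Mk (flip (base t) i) (base t)).
  by rewrite ltNge (ltW x_move).
have [y1 y2 y3 _] := gadget_ymoves_stage3 M_ge1 N_ge2.
rewrite (F_flip_y _ st) (F_stage st) empty ltrD2l.
case: m lt_m4 => [|[|[|[|m //]]]] lt_m4 /= lt_g.
- by rewrite ltNge (ltW y1) in lt_g.
- by rewrite ltNge (ltW y2) in lt_g.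
- by rewrite ltNge (ltW y3) in lt_g.
- by congr flip; apply: val_inj.
Qed.

Lemma not_local_max_stage3 t : stage t 3 -> weight (base t) = 0 -> ~~ local_max t.
Proof.
move=> st empty; apply/local_maxPn; exists (yc 3).
rewrite (F_flip_y _ st) (F_stage st) empty ltrD2l /=.
by have [_ _ _ y4] := gadget_ymoves_stage3 M_ge1 N_ge2.
Qed.

Lemma improve_stage4 t u : stage t 4 -> adj t u -> F t < F u ->
  exists2 i, u = flip t (xcoord i) & F (base t) < F (flip (base t) i).
Proof.
move=> st /adjP[j ->]; case: (coordP j) => [i | m lt_m4].
  rewrite (F_stage st) (F_stage (stage_flip_x i st)) base_flip_x /=.
  by rewrite !gadget1111 ltrD2r; exists i.
have [y1 y2 y3 y4] := gadget_ymoves_stage4 M_ge1 N_ge2 (weight_range (base t)).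
rewrite (F_flip_y _ st) (F_stage st) ltrD2l.
case: m lt_m4 => [|[|[|[|m //]]]] lt_m4 /= lt_g.
- by rewrite ltNge (ltW y1) in lt_g.
- by rewrite ltNge (ltW y2) in lt_g.
- by rewrite ltNge (ltW y3) in lt_g.
- by rewrite ltNge (ltW y4) in lt_g.
Qed.

Lemma local_max_stage4 t : stage t 4 -> local_max t = local_max (base t).
Proof.
move=> st; apply/idP/idP => [|lm_base].
  apply: contraLR => /local_maxPn[i lt_i]; apply/local_maxPn; exists (xcoord i).
  rewrite (F_stage st) (F_stage (stage_flip_x i st)) base_flip_x /=.
  by rewrite !gadget1111 ltrD2r.
apply/forallP => u; apply/implyP => adj_tu; apply/negP => lt_tu.
have [i _ lt_i] := improve_stage4 st adj_tu lt_tu.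
by move/forallP/(_ (flip (base t) i)): lm_base; rewrite adj_flip lt_i.
Qed.
End Stages.

Definition reachable_max_is_ones k : Prop :=
  local_max (ones k) /\
  forall vs, increasing_path (origin k) vs -> local_max (last (origin k) vs) ->
    last (origin k) vs = ones k.

Section Paths.
Variables (k a : nat).
Hypotheses (p_k : is_p k a) (reach_k : reachable_max_is_ones k).
Implicit Types (t : (dim k.+1).-tuple bool) (vs : seq ((dim k.+1).-tuple bool)).

Lemma path_stage4 vs t : stage t 4 -> increasing_path t vs -> local_max (last t vs) ->
  exists ws, [/\ increasing_path (base t) ws, size ws = size vs,
    last (base t) ws = base (last t vs), stage (last t vs) 4
    & local_max (base (last t vs))].
Proof.
elim: vs t => [|u vs IHvs] t st; first by exists [::]; split; rewrite -?(local_max_stage4 st).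
rewrite increasing_path_cons => /and3P[adj_tu lt_tu path_u] /= lm_last.
have [i eq_u lt_i] := improve_stage4 st adj_tu lt_tu.
have st_u : stage u 4 by rewrite eq_u; apply: stage_flip_x.
have [ws [path_ws size_ws last_ws st_last lm_base]] := IHvs u st_u path_u lm_last.
have path_base : increasing_path (base t) (base u :: ws).
  by rewrite increasing_path_cons path_ws eq_u base_flip_x adj_flip lt_i.
by exists (base u :: ws); split; rewrite //= size_ws.
Qed.

Lemma path_stage3 vs t : stage t 3 -> weight (base t) = 0 ->
  increasing_path t vs -> local_max (last t vs) ->
  (a <= size vs)%N /\ last t vs = ones k.+1.
Proof.
case: vs => [|u vs] st empty; first by rewrite /= (negbTE (not_local_max_stage3 st empty)).
rewrite increasing_path_cons => /and3P[adj_tu lt_tu path_u] /= lm_last.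
have eq_u := improve_stage3 st empty adj_tu lt_tu.
have st_u : stage u 4 by rewrite eq_u; apply: stage_flip_y.
have base_u : base u = origin k by rewrite eq_u base_flip_y; apply: weight_eq0.
have [ws [path_ws size_ws last_ws st_last lm_base]] := path_stage4 st_u path_u lm_last.
rewrite base_u in path_ws last_ws; rewrite -last_ws in lm_base.
split; first by rewrite -size_ws ltnW // ltnS; apply: p_k.2.
by apply: ones_succ => //; rewrite -last_ws; apply: reach_k.2.
Qed.

Lemma path_stage2 vs t : stage t 2 -> increasing_path t vs -> local_max (last t vs) ->
  (a <= size vs)%N /\ last t vs = ones k.+1.
Proof.
elim: vs t => [|u vs IHvs] t st; first by rewrite /= (negbTE (not_local_max_stage2 st)).
rewrite increasing_path_cons => /and3P[adj_tu lt_tu path_u] /= lm_last.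
have [[i eq_u] | [eq_u empty]] := improve_stage2 st adj_tu lt_tu.
  have st_u : stage u 2 by rewrite eq_u; apply: stage_flip_x.
  by have [le_a ->] := IHvs u st_u path_u lm_last; rewrite ltnW.
have st_u : stage u 3 by rewrite eq_u; apply: stage_flip_y.
have empty_u : weight (base u) = 0 by rewrite eq_u base_flip_y.
by have [le_a ->] := path_stage3 st_u empty_u path_u lm_last; rewrite ltnW.
Qed.

Lemma path_stage1 vs t : stage t 1 -> weight (base t) = (dim k)%:Z ->
  increasing_path t vs -> local_max (last t vs) ->
  (a <= size vs)%N /\ last t vs = ones k.+1.
Proof.
case: vs => [|u vs] st full; first by rewrite /= (negbTE (not_local_max_stage1 st full)).
rewrite increasing_path_cons => /and3P[adj_tu lt_tu path_u] /= lm_last.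
have st_u : stage u 2 by rewrite (improve_stage1 st full adj_tu lt_tu); apply: stage_flip_y.
by have [le_a ->] := path_stage2 st_u path_u lm_last; rewrite ltnW.
Qed.

Lemma path_stage0 vs t ps : stage t 0 ->
  increasing_path (origin k) ps -> last (origin k) ps = base t ->
  increasing_path t vs -> local_max (last t vs) ->
  exists ws, [/\ increasing_path (base t) ws, last (base t) ws = ones k,
    (size ws + a <= size vs)%N & last t vs = ones k.+1].
Proof.
elim: vs t ps => [|u vs IHvs] t ps st path_ps last_ps.
  move=> _ /= lm_t; have [lm_base | nlm_base] := boolP (local_max (base t)).
    have /reach_k.2 := path_ps; rewrite last_ps => /(_ lm_base) base_ones.
    have full : weight (base t) = (dim k)%:Z by rewrite base_ones weight_nseq mul1n.
    by rewrite (negbTE (not_local_max_stage0 st (or_intror full))) in lm_t.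
  by rewrite (negbTE (not_local_max_stage0 st (or_introl nlm_base))) in lm_t.
rewrite increasing_path_cons => /and3P[adj_tu lt_tu path_u] /= lm_last.
have [[i eq_u lt_i] | [eq_u full]] := improve_stage0 st adj_tu lt_tu.
  have st_u : stage u 0 by rewrite eq_u; apply: stage_flip_x.
  have base_u : base u = flip (base t) i by rewrite eq_u base_flip_x.
  have path_ps' : increasing_path (origin k) (rcons ps (base u)).
    rewrite /increasing_path rcons_path; apply/andP; split; first exact: path_ps.
    by rewrite last_ps base_u adj_flip lt_i.
  have [ws [path_ws last_ws size_ws ->]] :=
    IHvs u _ st_u path_ps' (last_rcons _ _ _) path_u lm_last.
  exists (base u :: ws); split => //.
  by rewrite increasing_path_cons path_ws base_u adj_flip lt_i.
have st_u : stage u 1 by rewrite eq_u; apply: stage_flip_y.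
have full_u : weight (base u) = (dim k)%:Z by rewrite eq_u base_flip_y.
have [le_a ->] := path_stage1 st_u full_u path_u lm_last.
exists [::]; split => //=; first exact: weight_eq_size.
by rewrite add0n ltnW.
Qed.

Lemma path_from_origin vs :
  increasing_path (origin k.+1) vs -> local_max (last (origin k.+1) vs) ->
  (2 * a <= size vs)%N /\ last (origin k.+1) vs = ones k.+1.
Proof.
move=> path_vs lm_vs.
have [ws [path_ws last_ws size_ws ->]] :=
  path_stage0 (ps := [::]) (stage_origin k) isT (esym (base_origin k)) path_vs lm_vs.
rewrite base_origin in path_ws last_ws; split => //.
have le_a : (a <= size ws)%N by apply: p_k.2; rewrite // last_ws; exact: reach_k.1.
by move: size_ws; lia.
Qed.
End Paths.

Lemma reachable_max_is_ones_succ k :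
  reachable_max_is_ones k -> reachable_max_is_ones k.+1.
Proof.
move=> reach_k; have [a p_k] := exists_p k; split.
  by rewrite (local_max_stage4 (stage_ones k)) base_ones; exact: reach_k.1.
by move=> vs path_vs lm_vs; have [] := path_from_origin p_k reach_k path_vs lm_vs.
Qed.

Lemma F0 (t : (dim 0).-tuple bool) : F t = weight t.
Proof. by rewrite /weight !big_ord_recl big_ord0 /F /= /vec !(tnth_nth false) addr0. Qed.

Lemma local_max0 (t : (dim 0).-tuple bool) : local_max t -> t = ones 0.
Proof.
move=> lm_t; apply: eq_from_tnth => i; rewrite tnth_nseq.
apply: contraTT lm_t => /negbTE zero_i; apply/local_maxPn; exists i.
by rewrite !F0 weight_flip zero_i ltrDl.
Qed.

Lemma reachable_max_is_ones0 : reachable_max_is_ones 0.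
Proof.
split=> [|vs _]; last exact: local_max0.
apply/forallP => w; apply/implyP => _; rewrite -leNgt !F0 weight_nseq mul1n.
exact: weight_le.
Qed.

Lemma weight_last_path0 (v : (dim 0).-tuple bool) vs : increasing_path v vs ->
  weight (last v vs) = weight v + (size vs)%:Z.
Proof.
elim: vs v => [|u vs IHvs] v; first by rewrite addr0.
rewrite increasing_path_cons => /and3P[/adjP[j ->] lt_vu path_u] /=.
rewrite (IHvs _ path_u); move: lt_vu; rewrite !F0 weight_flip.
case: (tnth v j) => [|_]; first by rewrite ltrDl.
by rewrite -addn1 PoszD; ring.
Qed.

Lemma is_p0 : is_p 0 2.
Proof.
have size2 vs : increasing_path (origin 0) vs -> local_max (last (origin 0) vs) ->
    size vs = 2%N.
  move=> path_vs /local_max0 last_ones; have := weight_last_path0 path_vs.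
  by rewrite last_ones !weight_nseq add0r => /eqP; rewrite eqz_nat => /eqP <-.
split=> [|vs path_vs lm_vs]; last by rewrite size2.
by have [vs path_vs lm_vs] := climb_to_local_max (origin 0); exists vs; rewrite size2.
Qed.

Theorem mainTheorem4 :
  is_p 0 2 /\
  (forall k : nat, exists a b : nat, [/\ is_p k a, is_p k.+1 b & (2 * a <= b)%N]).
Proof.
split=> [|k]; first exact: is_p0.
have reach_k : reachable_max_is_ones k.
  by elim: k => [|k]; [exact: reachable_max_is_ones0 | exact: reachable_max_is_ones_succ].
have [a p_k] := exists_p k; have [b p_k1] := exists_p k.+1.
exists a, b; split => //.
have [[vs [path_vs lm_vs <-]] _] := p_k1.
by have [] := path_from_origin p_k reach_k path_vs lm_vs.
Qed.
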